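(* Let $f\in C(\mathbb{R}^2)$ be $\kappa$-Lipschitz and satisfy $f(r+l,\tau+k)=f(r,\tau)$ for all $(l,k)\in\mathbb{Z}^2$, and let $v(\tau;c)$ be the solution of $\dot v=f(v,\tau)$, $\tau>0$, $v(0)=c$. Then for all $\sigma,l,t>0$ and all $c\in\mathbb{R}$, \[v((\sigma+l)t;(\sigma+l)c)\le v(\sigma t;\sigma c)+v(lt;lc)+2(\|f\|_\infty+1).\] *)

From Stdlib Require Import Reals.
From Coquelicot Require Import Coquelicot.
Open Scope R_scope.

Definition lipschitz2 (kappa : R) (f : R -> R -> R) : Prop :=
  forall x1 t1 x2 t2 : R,
    Rabs (f x1 t1 - f x2 t2) <= kappa * sqrt ((x1 - x2) ^ 2 + (t1 - t2) ^ 2).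

Definition periodic_Z2 (f : R -> R -> R) : Prop :=
  forall (r tau : R) (l k : Z), f (r + IZR l) (tau + IZR k) = f r tau.

(* ||f||_oo = sup over R^2 of |f| (as a real; finite for continuous periodic f). *)
Definition sup_norm (f : R -> R -> R) : R :=
  real (Lub_Rbar (fun y => exists x t, y = Rabs (f x t))).

Definition is_solution_family (f : R -> R -> R) (v : R -> R -> R) : Prop :=
  forall c : R,
    v 0 c = c /\
    filterlim (fun s => v s c) (at_right 0) (locally c) /\
    (forall tau, 0 < tau -> is_derive (fun s => v s c) tau (f (v tau c) tau)).

From Stdlib Require Import Reals Lra Lia.
From Coquelicot Require Import Coquelicot.
Open Scope R_scope.

(* Since f is 1-periodic in both variables, s |-> v(s - m; c') + j is again a
   solution for all integers m, j, and the comparison principle for the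
   Lipschitz equation turns an ordering of values at one time into an ordering
   at all later times.  With m = floor(sigma t), the solution started at
   (sigma + l) c stays below v(.; sigma c) + ceil(l c) on [0, m], and below
   v(. - m; l c) + j on [m, (sigma + l) t], where j is an integer with
   v(m; (sigma + l) c) <= l c + j <= v(m; (sigma + l) c) + 1.  The two integer
   roundings cost at most 1 each, and the time mismatch sigma t - m < 1, met
   twice, costs at most ||f||_oo each time because |dv/dtau| <= ||f||_oo. *)

Definition right_continuous (g : R -> R) (t0 : R) : Prop :=
  filterlim g (at_right t0) (locally (g t0)).

Lemma is_derive_right_continuous (g : R -> R) (x l : R) :
  is_derive g x l -> right_continuous g x.
Proof.
  intros Hd. apply (filterlim_filter_le_1 g (filter_le_within (F := locally x) _)).
  exact (ex_derive_continuous g x (ex_intro _ l Hd)).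
Qed.

Lemma right_continuous_plus (g1 g2 : R -> R) (t0 : R) :
  right_continuous g1 t0 -> right_continuous g2 t0 ->
  right_continuous (fun x => g1 x + g2 x) t0.
Proof.
  intros H1 H2. exact (filterlim_comp_2 g1 g2 plus H1 H2 (filterlim_plus _ _)).
Qed.

Lemma right_continuous_opp (g : R -> R) (t0 : R) :
  right_continuous g t0 -> right_continuous (fun x => - g x) t0.
Proof. intros H. exact (filterlim_comp _ _ _ g opp _ _ _ H (filterlim_opp _)). Qed.

Lemma right_continuous_mult (g1 g2 : R -> R) (t0 : R) :
  right_continuous g1 t0 -> right_continuous g2 t0 ->
  right_continuous (fun x => g1 x * g2 x) t0.
Proof.
  intros H1 H2. exact (filterlim_comp_2 g1 g2 mult H1 H2 (filterlim_mult _ _)).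
Qed.

Lemma right_continuous_const (a t0 : R) : right_continuous (fun _ => a) t0.
Proof. apply filterlim_const. Qed.

Lemma right_continuous_shift (g : R -> R) (m : R) :
  right_continuous g 0 -> right_continuous (fun s => g (s - m)) m.
Proof.
  intros H P HP. unfold right_continuous in H.
  rewrite Rminus_diag in HP. destruct (H P HP) as [eps Heps].
  exists eps. intros y Hy Hmy. apply Heps; [|lra].
  change (Rabs (y - m - 0) < eps). rewrite Rminus_0_r. exact Hy.
Qed.

Lemma mvt_right_continuous (g D : R -> R) (a b K : R) :
  a < b -> right_continuous g a ->
  (forall x, a < x <= b -> is_derive g x (D x)) ->
  (forall x, a < x <= b -> D x <= K) ->
  g b - g a <= K * (b - a).
Proof.
  intros Hab Hrc Hd HD.
  assert (Hinner : forall u, a < u < b -> g b - K * (b - a) <= g u + - (K * (u - a))).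
  { intros u Hu.
    destruct (MVT_gen g u b D) as [x [Hx Hmvt]];
      rewrite ?Rmin_left, ?Rmax_right in * by lra.
    - intros x Hx. apply Hd; lra.
    - intros x Hx. apply continuity_pt_filterlim, (ex_derive_continuous g x).
      exists (D x). apply Hd; lra.
    - assert (D x <= K) by (apply HD; lra).
      assert (D x * (b - u) <= K * (b - u)) by (apply Rmult_le_compat_r; lra).
      lra. }
  assert (Hlim : right_continuous (fun u => g u + - (K * (u - a))) a).
  { apply right_continuous_plus; [exact Hrc|].
    apply (is_derive_right_continuous _ _ (- (K * 1))). auto_derive; auto; ring. }
  enough (g b - K * (b - a) <= g a + - (K * (a - a))) by lra.
  apply (closed_filterlim_loc (F := at_right a) _ (fun y => g b - K * (b - a) <= y) _ Hlim).
  - exists (mkposreal _ (proj2 (Rlt_0_minus a b) Hab)). intros u Hu Hau.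
    apply Hinner. split; [exact Hau|].
    change (Rabs (u - a) < b - a) in Hu. apply Rabs_def2 in Hu. lra.
  - apply closed_ge.
Qed.

Lemma lub_nonpos_of_continuous (g : R -> R) (E : R -> Prop) (s : R) :
  is_lub E s -> (forall x, E x -> g x <= 0) ->
  filterlim g (locally s) (locally (g s)) -> g s <= 0.
Proof.
  intros [Hub Hleast] HE Hc.
  apply Rnot_lt_le; intros Hpos.
  destruct (Hc _ (open_gt 0 (g s) Hpos)) as [eps Heps].
  assert (Hbound : s <= s - eps / 2).
  { apply Hleast. intros x Ex.
    apply Rnot_lt_le; intros Hx.
    assert (x <= s) by (apply Hub; exact Ex).
    assert (0 < g x).
    { apply Heps. change (Rabs (x - s) < eps).
      rewrite Rabs_left1 by lra. destruct eps; simpl in *; lra. }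
    specialize (HE x Ex). lra. }
  destruct eps; simpl in *; lra.
Qed.

Lemma differential_inequality_nonpos (g D : R -> R) (kappa t0 T : R) :
  t0 <= T -> right_continuous g t0 ->
  (forall x, t0 < x <= T -> is_derive g x (D x)) ->
  (forall x, t0 < x <= T -> 0 < g x -> D x <= kappa * g x) ->
  g t0 <= 0 -> g T <= 0.
Proof.
  intros HT Hrc Hd HD H0.
  apply Rnot_lt_le; intros HgT.
  set (E := fun x => t0 <= x <= T /\ g x <= 0).
  destruct (completeness E) as [s Hs].
  { exists T. intros x Ex. apply Ex. }
  { exists t0. split; [lra | exact H0]. }
  pose proof Hs as [Hub Hleast].
  assert (Hts : t0 <= s <= T).
  { split; [apply Hub; split; [lra | exact H0] | apply Hleast; intros x Ex; apply Ex]. }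
  assert (Hrcs : right_continuous g s).
  { destruct (Req_dec s t0) as [-> | Hne]; [exact Hrc |].
    apply (is_derive_right_continuous g s (D s)), Hd; lra. }
  assert (Hgs : g s <= 0).
  { destruct (Req_dec s t0) as [-> | Hne]; [exact H0 |].
    apply (lub_nonpos_of_continuous g E s Hs); [intros x Ex; apply Ex |].
    exact (ex_derive_continuous g s (ex_intro _ (D s) (Hd s ltac:(lra)))). }
  (* Past the last point s where g <= 0, D <= kappa g makes exp(-kappa x) g x
     nonincreasing, so it cannot climb from g s <= 0 to g T > 0. *)
  assert (Hpos : forall x, s < x <= T -> 0 < g x).
  { intros x Hx. apply Rnot_le_lt; intros Hgx.
    assert (x <= s) by (apply Hub; split; [lra | exact Hgx]). lra. }
  assert (HsT : s < T) by (destruct (Req_dec s T) as [-> |]; lra).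
  set (h := fun x => exp (- kappa * x) * g x).
  assert (Hexp : forall x, is_derive (fun x => exp (- kappa * x)) x (- kappa * exp (- kappa * x))).
  { intros x. auto_derive; auto; ring. }
  assert (Hdecr : h T - h s <= 0 * (T - s)).
  { apply (mvt_right_continuous h (fun x => exp (- kappa * x) * (D x - kappa * g x)));
      [exact HsT | | |].
    - apply right_continuous_mult; [|exact Hrcs].
      exact (is_derive_right_continuous _ _ _ (Hexp s)).
    - intros x Hx.
      replace (exp (- kappa * x) * (D x - kappa * g x))
        with (plus (mult (- kappa * exp (- kappa * x)) (g x)) (mult (exp (- kappa * x)) (D x)))
        by (unfold plus, mult; simpl; ring).
      apply (is_derive_mult (fun x => exp (- kappa * x)) g); [apply Hexp | apply Hd; lra | intros; apply Rmult_comm].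
    - intros x Hx.
      assert (D x <= kappa * g x) by (apply HD; [lra | apply Hpos; exact Hx]).
      pose proof (exp_pos (- kappa * x)). nra. }
  assert (0 < h T) by (apply Rmult_lt_0_compat; [apply exp_pos | exact HgT]).
  assert (h s <= 0) by (pose proof (exp_pos (- kappa * s)); unfold h; nra).
  lra.
Qed.

Lemma ode_comparison (F : R -> R -> R) (kappa : R) (y1 y2 : R -> R) (t0 T : R) :
  (forall x y t, Rabs (F x t - F y t) <= kappa * Rabs (x - y)) ->
  t0 <= T -> right_continuous y1 t0 -> right_continuous y2 t0 ->
  (forall x, t0 < x <= T -> is_derive y1 x (F (y1 x) x)) ->
  (forall x, t0 < x <= T -> is_derive y2 x (F (y2 x) x)) ->
  y1 t0 <= y2 t0 -> y1 T <= y2 T.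
Proof.
  intros HF HT R1 R2 D1 D2 H0.
  enough (y1 T - y2 T <= 0) by lra.
  apply (differential_inequality_nonpos (fun x => y1 x - y2 x)
           (fun x => F (y1 x) x - F (y2 x) x) kappa t0 T HT).
  - exact (right_continuous_plus _ _ _ R1 (right_continuous_opp _ _ R2)).
  - intros x Hx. apply (is_derive_minus y1 y2); [apply D1 | apply D2]; exact Hx.
  - intros x _ Hx. rewrite <- (Rabs_right (y1 x - y2 x)) by lra.
    eapply Rle_trans; [apply Rle_abs | apply HF].
  - lra.
Qed.

Lemma lipschitz2_fst (kappa : R) (f : R -> R -> R) :
  lipschitz2 kappa f -> forall x y t, Rabs (f x t - f y t) <= kappa * Rabs (x - y).
Proof.
  intros Hlip x y t. specialize (Hlip x t y t).
  replace ((x - y) ^ 2 + (t - t) ^ 2) with (Rsqr (x - y)) in Hlip by (unfold Rsqr; ring).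
  rewrite sqrt_Rsqr_abs in Hlip. exact Hlip.
Qed.

Lemma periodic_lipschitz2_bounded (kappa : R) (f : R -> R -> R) :
  lipschitz2 kappa f -> periodic_Z2 f -> exists B, forall x t, Rabs (f x t) <= B.
Proof.
  intros Hlip Hper. exists (Rabs (f 0 0) + 2 * Rabs kappa). intros x t.
  assert (Hcell : f x t = f (frac_part x) (frac_part t)).
  { rewrite <- (Hper (frac_part x) (frac_part t) (Int_part x) (Int_part t)).
    f_equal; unfold frac_part; ring. }
  rewrite Hcell. pose proof (base_fp x). pose proof (base_fp t).
  set (p := frac_part x) in *. set (q := frac_part t) in *.
  assert (Hdist : sqrt ((p - 0) ^ 2 + (q - 0) ^ 2) <= 2).
  { rewrite <- (sqrt_square 2) by lra. apply sqrt_le_1_alt. nra. }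
  pose proof (Hlip p q 0 0). pose proof (sqrt_pos ((p - 0) ^ 2 + (q - 0) ^ 2)).
  pose proof (Rle_abs kappa). pose proof (Rabs_pos kappa).
  replace (f p q) with ((f p q - f 0 0) + f 0 0) by ring.
  eapply Rle_trans; [apply Rabs_triang | nra].
Qed.

Lemma Rabs_le_sup_norm (f : R -> R -> R) :
  (exists B, forall x t, Rabs (f x t) <= B) -> forall x t, Rabs (f x t) <= sup_norm f.
Proof.
  intros [B HB] x t. unfold sup_norm.
  destruct (Lub_Rbar_correct (fun y => exists x t, y = Rabs (f x t))) as [Hub Hleast].
  assert (Hle : Rbar_le (Lub_Rbar (fun y => exists x t, y = Rabs (f x t))) B).
  { apply Hleast. intros y [x' [t' ->]]. apply HB. }
  assert (Hge : Rbar_le (Rabs (f x t)) (Lub_Rbar (fun y => exists x t, y = Rabs (f x t)))).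
  { apply Hub. exists x, t. reflexivity. }
  destruct (Lub_Rbar _); simpl in *; tauto.
Qed.

Section SolutionFamily.

Variables (f v : R -> R -> R) (kappa : R).
Hypothesis Hv : is_solution_family f v.
Hypothesis Hper : periodic_Z2 f.
Hypothesis Hlip : lipschitz2 kappa f.

Lemma solution_right_continuous (c t0 : R) :
  0 <= t0 -> right_continuous (fun s => v s c) t0.
Proof.
  intros Ht0. destruct (Hv c) as [H0 [Hlim Hd]].
  destruct (Req_dec t0 0) as [-> | Hne].
  - unfold right_continuous. rewrite H0. exact Hlim.
  - exact (is_derive_right_continuous _ _ _ (Hd t0 ltac:(lra))).
Qed.

Lemma solution_increment_bound (M c t0 T : R) :
  (forall x t, Rabs (f x t) <= M) -> 0 <= t0 <= T ->
  Rabs (v T c - v t0 c) <= M * (T - t0).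
Proof.
  intros HM HT.
  destruct (Req_dec t0 T) as [<- | Hne].
  { rewrite !Rminus_diag, Rabs_R0. lra. }
  destruct (Hv c) as [_ [_ Hd]].
  assert (Hrc := solution_right_continuous c t0 (proj1 HT)).
  apply Rabs_le_between. split.
  - enough (- v T c - - v t0 c <= M * (T - t0)) by lra.
    apply (mvt_right_continuous (fun s => - v s c) (fun x => - f (v x c) x));
      [lra | exact (right_continuous_opp _ _ Hrc) | |].
    + intros x Hx. apply (is_derive_opp (fun s => v s c)), Hd. lra.
    + intros x _. pose proof (HM (v x c) x). rewrite <- Rabs_Ropp in *.
      pose proof (Rle_abs (- f (v x c) x)). lra.
  - apply (mvt_right_continuous (fun s => v s c) (fun x => f (v x c) x));
      [lra | exact Hrc | |].
    + intros x Hx. apply Hd. lra.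
    + intros x _. pose proof (HM (v x c) x). pose proof (Rle_abs (f (v x c) x)). lra.
Qed.

Lemma solution_translate_is_derive (m j : Z) (c x : R) :
  IZR m < x ->
  is_derive (fun s => v (s - IZR m) c + IZR j) x (f (v (x - IZR m) c + IZR j) x).
Proof.
  intros Hx. destruct (Hv c) as [_ [_ Hd]].
  assert (Hval : f (v (x - IZR m) c + IZR j) x = f (v (x - IZR m) c) (x - IZR m)).
  { rewrite <- (Hper (v (x - IZR m) c) (x - IZR m) j m). f_equal. ring. }
  rewrite Hval, <- (Rplus_0_r (f _ _)).
  apply (is_derive_plus (fun s => v (s - IZR m) c) (fun _ => IZR j));
    [| auto_derive; auto].
  rewrite <- (Rmult_1_l (f _ _)).
  apply (is_derive_comp (fun s => v s c) (fun s => s - IZR m)).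
  - apply Hd. lra.
  - auto_derive; auto.
Qed.

Lemma solution_le_translate (m j : Z) (c c' T : R) :
  0 <= IZR m <= T -> v (IZR m) c <= c' + IZR j ->
  v T c <= v (T - IZR m) c' + IZR j.
Proof.
  intros HmT Hstart.
  apply (ode_comparison f kappa (fun s => v s c) (fun s => v (s - IZR m) c' + IZR j)
           (IZR m) T (lipschitz2_fst _ _ Hlip)); [lra | | | | |].
  - apply solution_right_continuous. lra.
  - apply right_continuous_plus; [| apply right_continuous_const].
    apply (right_continuous_shift (fun s => v s c')), solution_right_continuous, Rle_refl.
  - intros x Hx. apply (proj2 (proj2 (Hv c))). lra.
  - intros x Hx. apply solution_translate_is_derive. lra.
  - rewrite Rminus_diag, (proj1 (Hv c')). exact Hstart.
Qed.

Lemma solution_almost_subadditive (a b c1 c2 : R) :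
  0 < a -> 0 < b ->
  v (a + b) (c1 + c2) <= v a c1 + v b c2 + 2 * (sup_norm f + 1).
Proof.
  intros Ha Hb.
  set (M := sup_norm f).
  assert (HM : forall x t, Rabs (f x t) <= M).
  { apply Rabs_le_sup_norm, (periodic_lipschitz2_bounded kappa); assumption. }
  assert (HM0 : 0 <= M) by (eapply Rle_trans; [apply Rabs_pos | apply (HM 0 0)]).
  destruct (base_Int_part a) as [Hma Ham]. set (m := Int_part a) in *.
  assert (Hm0 : 0 <= IZR m).
  { apply IZR_le. assert (-1 < m)%Z by (apply lt_IZR; simpl; lra). lia. }
  destruct (archimed c2) as [Hk1 Hk2]. set (k := up c2) in *.
  assert (Hmid : v (IZR m) (c1 + c2) <= v (IZR m) c1 + IZR k).
  { pose proof (solution_le_translate 0 k (c1 + c2) c1 (IZR m)) as Hcmp.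
    rewrite Rminus_0_r in Hcmp. apply Hcmp; [lra |].
    rewrite (proj1 (Hv _)). lra. }
  destruct (archimed (v (IZR m) (c1 + c2) - c2)) as [Hj1 Hj2].
  set (j := up (v (IZR m) (c1 + c2) - c2)) in *.
  assert (Hend : v (a + b) (c1 + c2) <= v (a + b - IZR m) c2 + IZR j).
  { apply solution_le_translate; lra. }
  pose proof (solution_increment_bound M c1 (IZR m) a HM ltac:(lra)) as Hfirst.
  pose proof (solution_increment_bound M c2 b (a + b - IZR m) HM ltac:(lra)) as Hsecond.
  apply Rabs_le_between' in Hfirst, Hsecond.
  replace (a + b - IZR m - b) with (a - IZR m) in Hsecond by ring.
  assert (M * (a - IZR m) <= M * 1) by (apply Rmult_le_compat_l; lra).
  lra.
Qed.

End SolutionFamily.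

Theorem lemma2p1 (f : R -> R -> R) (kappa : R) (v : R -> R -> R)
  (Hlip : lipschitz2 kappa f) (Hper : periodic_Z2 f)
  (Hv : is_solution_family f v) :
  forall sigma l t c : R, 0 < sigma -> 0 < l -> 0 < t ->
    v ((sigma + l) * t) ((sigma + l) * c)
    <= v (sigma * t) (sigma * c) + v (l * t) (l * c) + 2 * (sup_norm f + 1).
Proof.
  intros sigma l t c Hs Hl Ht.
  replace ((sigma + l) * t) with (sigma * t + l * t) by ring.
  replace ((sigma + l) * c) with (sigma * c + l * c) by ring.
  apply (solution_almost_subadditive f v kappa); try assumption;
    apply Rmult_lt_0_compat; assumption.
Qed.
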